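(* Define $g(n)$ for $n\ge1$ greedily: $g(n)$ is the least positive integer such that $g(n)\notin\{g(1),\dots,g(n-1)\}$ and $g(n)-n\notin\{g(i)-i: 1\le i\le n-1\}$. Then $g(n)=f(n)$ for all $n\ge 1$. (Equivalently, $(f(n))_{n\ge1}$ is the lexicographically least sequence of distinct positive integers such that the integers $f(n)-n$, $n\ge1$, are pairwise distinct.)
   Context: $\mathbb{N}=\{0,1,2,\dots\}$. The sequence $f:\mathbb{N}\to\mathbb{N}$ is defined greedily: $f(0)=0$, and for $n\ge1$, $f(n)$ is the least natural number such that (i) $f(n)\notin\{f(0),f(1),\dots,f(n-1)\}$ and (ii) $\sum_{1\le i\le n} f(i)$ is divisible by $n$. *)

From mathcomp Require Import all_boot all_order all_algebra.
Set Implicit Arguments. Unset Strict Implicit. Unset Printing Implicit Defensive.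
Import Order.TTheory GRing.Theory Num.Theory.

(* is_f f : f is the greedy sequence of the paper:
   f 0 = 0, and for n >= 1, f n is the least natural number that is
   different from f 0, ..., f (n-1) and makes n divide f 1 + ... + f n. *)
Definition is_f (f : nat -> nat) : Prop :=
  f 0 = 0 /\
  forall n, 1 <= n ->
    [/\ (forall i, i < n -> f i <> f n),
        n %| \sum_(1 <= i < n.+1) f i
      & forall m, m < f n ->
          (exists2 i, i < n & f i = m) \/ ~~ (n %| \sum_(1 <= i < n) f i + m)].

(* is_g g : g is the greedy sequence g(1), g(2), ... (g 0 is irrelevant):
   for n >= 1, g n is the least positive integer different from
   g 1, ..., g (n-1) such that g n - n (an integer) differs from all
   g i - i, 1 <= i <= n-1. *)
Definition is_g (g : nat -> nat) : Prop :=
  forall n, 1 <= n ->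
    [/\ 0 < g n,
        (forall i, 1 <= i < n -> g i <> g n),
        (forall i, 1 <= i < n -> ((g i)%:Z - i%:Z <> (g n)%:Z - n%:Z)%R)
      & forall m, 0 < m < g n ->
          (exists2 i, 1 <= i < n & g i = m) \/
          (exists2 i, 1 <= i < n & ((g i)%:Z - i%:Z = m%:Z - n%:Z)%R)].

From mathcomp Require Import all_boot all_order all_algebra.
From mathcomp Require Import zify.

Set Implicit Arguments.
Unset Strict Implicit.
Unset Printing Implicit Defensive.

(* Both greedy sequences are computed by one explicit process.  Keep a
   "mean" a_n and the history h 0 = 0, h 1, ..., h n; at step n+1:
     - if a_n already occurs in the history, h (n+1) = a_n + (n+1) and
       a_(n+1) = a_n + 1;
     - otherwise h (n+1) = a_n and a_(n+1) = a_n.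
   Invariants (with s_n := n - a_n): a_n <= n; h 1 + ... + h n = n a_n;
   every value below a_n occurs in the history; all h i <= a_n + n; and the
   differences h i - i (1 <= i <= n) fill exactly the integer window
   [-s_n, a_n), each step adding one new endpoint.
   The divisibility fact (k+1 | k a + m  <->  m = a, for a <= k, m <= a + k)
   shows h satisfies the divisibility-greedy specification is_f, and the
   window shows it satisfies the difference-greedy specification is_g.
   Finally, any greedy specification in which no solution can be strictly
   below another at the first index where they differ has a unique solution,
   so every f and every g coincide with h. *)

(* state n = (a_n, [:: h n; ...; h 0]). *)
Fixpoint state (n : nat) : nat * seq nat :=
  if n is k.+1 then
    let: (a, s) := state k in
    if a \in s then (a.+1, (a + k.+1) :: s) else (a, a :: s)
  else (0, [:: 0]).

Definition mean (n : nat) : nat := (state n).1.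
Definition hist (n : nat) : seq nat := (state n).2.
Definition h (n : nat) : nat := head 0 (hist n).

Definition seen (n : nat) : bool := mean n \in hist n.

(* s_n, the number of differences h i - i that are negative. *)
Definition slack (n : nat) : nat := n - mean n.

Lemma state_step n :
  state n.+1 = if seen n then ((mean n).+1, (mean n + n.+1) :: hist n)
               else (mean n, mean n :: hist n).
Proof. by rewrite /seen /mean /hist /=; case: (state n). Qed.

Lemma meanS n : mean n.+1 = if seen n then (mean n).+1 else mean n.
Proof. by rewrite /mean state_step; case: seen. Qed.

Lemma hS n : h n.+1 = if seen n then mean n + n.+1 else mean n.
Proof. by rewrite /h /hist state_step; case: seen. Qed.

Lemma histS n : hist n.+1 = h n.+1 :: hist n.
Proof. by rewrite /h /hist state_step; case: seen. Qed.

Lemma h0 : h 0 = 0.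
Proof. by []. Qed.

Lemma histP n x : reflect (exists2 i, i <= n & h i = x) (x \in hist n).
Proof.
apply: (iffP idP).
  elim: n => [|n IH]; first by rewrite inE => /eqP ->; exists 0.
  rewrite histS inE => /orP [/eqP ->|/IH [i le_in <-]]; first by exists n.+1.
  by exists i; first exact: leqW.
case=> i; elim: n => [|n IH]; first by rewrite leqn0 => /eqP -> <-; rewrite inE.
rewrite histS inE leq_eqVlt => /orP [/eqP -> ->|lt_in hi]; first by rewrite eqxx.
by rewrite IH ?orbT.
Qed.

Lemma mean_le n : mean n <= n.
Proof. by elim: n => // n IH; rewrite meanS; case: seen; lia. Qed.

Lemma slackS n : slack n.+1 = if seen n then slack n else (slack n).+1.
Proof. by rewrite /slack meanS; have := mean_le n; case: seen; lia. Qed.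

(* All terms so far are bounded by a_n + n; a "large" new term therefore
   never repeats an earlier one. *)
Lemma h_le n i : i <= n -> h i <= mean n + n.
Proof.
elim: n => [|n IH]; first by rewrite leqn0 => /eqP ->.
rewrite leq_eqVlt => /orP [/eqP ->|/IH]; rewrite meanS ?hS; case: seen; lia.
Qed.

(* Each new term differs from all earlier ones: a large term exceeds them,
   and a term equal to the mean is taken only when the mean is unseen. *)
Lemma h_new n i : i < n.+1 -> h i <> h n.+1.
Proof.
move=> lt_in; rewrite hS; case: (boolP (seen n)) => [_|unseen].
  by have := @h_le n i lt_in; lia.
by move=> hi; case/negP: unseen; apply/histP; exists i.
Qed.

Lemma hist_cover n v : v < mean n -> v \in hist n.
Proof.
elim: n => [|n IH]; first by [].
rewrite meanS histS inE.
case: (boolP (seen n)) => [seen_n|_] lt_v; last by rewrite IH ?orbT.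
case: (ltngtP v (mean n)) => [/IH ->|gt_v|->].
- by rewrite orbT.
- by lia.
- by apply/orP; right.
Qed.

Lemma hist_pos n m : 0 < m -> m \in hist n -> exists2 i, 1 <= i <= n & h i = m.
Proof.
move=> m_gt0 /histP [[|i] le_in hi]; first by move: m_gt0; rewrite -hi h0.
by exists i.+1.
Qed.

Lemma sum_h n : \sum_(1 <= i < n.+1) h i = n * mean n.
Proof.
elim: n => [|n IH]; first by rewrite big_geq.
by rewrite big_nat_recr //= IH hS meanS; case: seen; lia.
Qed.

Lemma dvd_mean k a m : a <= k -> m <= a + k -> (k.+1 %| k * a + m) = (m == a).
Proof.
move=> le_ak le_m; case: (ltngtP m a) => [lt_ma|lt_am|->].
- case: a le_ak lt_ma {le_m} => // a le_ak lt_ma.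
  have -> : k * a.+1 + m = k.+1 * a + (k + m - a) by rewrite mulnS mulSn; lia.
  by rewrite dvdn_addr ?dvdn_mulr // gtnNdvd //; lia.
- have -> : k * a + m = k.+1 * a + (m - a) by rewrite mulSn; lia.
  by rewrite dvdn_addr ?dvdn_mulr // gtnNdvd //; lia.
- by rewrite addnC -mulSn dvdn_mulr ?eqxx.
Qed.

(* h is the divisibility-greedy sequence: the only admissible candidate
   below h (n+1) would be m = a_n, which is taken exactly when it is new. *)
Lemma h_is_f : is_f h.
Proof.
split=> // -[|n] // _; split.
- by move=> i; apply: h_new.
- by rewrite sum_h dvdn_mulr.
move=> m; rewrite sum_h hS => lt_m.
rewrite dvd_mean ?mean_le //; last by move: lt_m; case: seen; lia.
case: (eqVneq m (mean n)) => [eq_m|]; [left | by right].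
have seen_n : seen n by move: lt_m; rewrite eq_m; case: seen; rewrite ?ltnn.
by case/histP: seen_n => i le_in hi; exists i; rewrite // eq_m.
Qed.

Local Open Scope ring_scope.

Definition delta (i : nat) : int := (h i)%:Z - i%:Z.

(* The integer window [-s_n, a_n) filled by the differences up to n. *)
Definition window (n : nat) (d : int) : bool :=
  (- (slack n)%:Z <= d) && (d < (mean n)%:Z).

Lemma windowS n d : window n.+1 d = window n d || (d == delta n.+1).
Proof.
rewrite /window /delta hS slackS meanS /slack.
by have := mean_le n; case: seen; lia.
Qed.

Lemma delta_fresh n : ~~ window n (delta n.+1).
Proof. by rewrite /window /delta hS /slack; have := mean_le n; case: seen; lia. Qed.

Lemma delta_window n i : (1 <= i <= n)%N -> window n (delta i).
Proof.
elim: n => [|n IH] i_range; first by lia.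
rewrite windowS; have [lt_in|ge_in] := ltnP i n.+1; first by rewrite IH //; lia.
have -> : i = n.+1 by lia.
by rewrite eqxx orbT.
Qed.

Lemma delta_inj i j : (1 <= i < j)%N -> delta i <> delta j.
Proof.
case: j => [|j] i_range; first by lia.
by move=> eq_ij; have := delta_fresh j; rewrite -eq_ij delta_window //; lia.
Qed.

Lemma window_cover n d : window n d -> exists2 i, (1 <= i <= n)%N & delta i = d.
Proof.
elim: n => [|n IH]; first by rewrite /window /slack /mean /=; lia.
rewrite windowS => /orP [/IH [i i_range <-]|/eqP ->]; last by exists n.+1; rewrite ?leqnn.
by exists i; first lia.
Qed.

(* h is the difference-greedy sequence: a candidate 0 < m < h (n+1) either
   is a value already taken (m <= a_n), or, when h (n+1) = a_n + n + 1, has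
   m - (n+1) in the window [-s_n, a_n), i.e. repeats a difference. *)
Lemma h_is_g : is_g h.
Proof.
move=> [|n] // _; split.
- rewrite hS; case: (boolP (seen n)) => [_|]; first by rewrite addnS.
  rewrite lt0n; apply: contra => /eqP mean0.
  by rewrite /seen mean0; apply/histP; exists 0.
- by move=> i /andP [_]; apply: h_new.
- by move=> i i_range; apply: delta_inj; lia.
move=> m /andP [m_gt0 lt_m]; have := mean_le n.
case: (ltngtP m (mean n)) => [lt_ma|lt_am|eq_ma] le_an.
- by left; apply: hist_pos => //; apply: hist_cover.
- right; have seen_n : seen n by move: lt_m; rewrite hS; case: seen; lia.
  have [i i_range eq_d] : exists2 i, (1 <= i <= n)%N & delta i = m%:Z - n.+1%:Z.
    by apply: window_cover; move: lt_m; rewrite /window /slack hS seen_n; lia.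
  by exists i.
- left; apply: hist_pos => //; rewrite eq_ma -/(seen n).
  by move: lt_m; rewrite hS eq_ma; case: seen; rewrite ?ltnn.
Qed.

Local Close Scope ring_scope.

Lemma greedy_unique (spec : (nat -> nat) -> Prop) (lo : nat) :
  (forall u v n, spec u -> spec v -> lo <= n ->
     (forall i, lo <= i < n -> u i = v i) -> u n <= v n) ->
  forall u v, spec u -> spec v -> forall n, lo <= n -> u n = v n.
Proof.
move=> no_smaller u v su sv; elim/ltn_ind=> n IH le_lo.
have agree i : lo <= i < n -> u i = v i by case/andP=> lo_i lt_in; apply: IH.
by apply/anti_leq/andP; split; apply: no_smaller => // i /agree ->.
Qed.

(* If two solutions of is_f agree below n, the first is not larger at n:
   a smaller value of the second would be an admissible earlier candidate
   for the first. *)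
Lemma f_no_smaller f1 f2 n : is_f f1 -> is_f f2 -> 0 <= n ->
  (forall i, 0 <= i < n -> f1 i = f2 i) -> f1 n <= f2 n.
Proof.
case: n => [|n] [f1_0 sf1] [f2_0 sf2] _ agree; first by rewrite f1_0 f2_0.
rewrite leqNgt; apply/negP => lt_f.
have [_ _ least] := sf1 n.+1 isT; have [fresh dvd_sum _] := sf2 n.+1 isT.
have same_sum : \sum_(1 <= i < n.+1) f1 i = \sum_(1 <= i < n.+1) f2 i.
  by apply: eq_big_nat => i /andP [_ lt_i]; rewrite agree.
case: (least _ lt_f) => [[i lt_i eq_i]|]; first by apply: (fresh i lt_i); rewrite -agree.
by rewrite same_sum -big_nat_recr //= dvd_sum.
Qed.

Lemma g_no_smaller g1 g2 n : is_g g1 -> is_g g2 -> 1 <= n ->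
  (forall i, 1 <= i < n -> g1 i = g2 i) -> g1 n <= g2 n.
Proof.
move=> sg1 sg2 n_gt0 agree; rewrite leqNgt; apply/negP => lt_g.
have [_ _ _ least] := sg1 n n_gt0; have [pos fresh fresh_d _] := sg2 n n_gt0.
case: (least (g2 n)); rewrite ?pos //.
  by case=> i i_range eq_i; apply: (fresh i i_range); rewrite -agree.
by case=> i i_range eq_i; apply: (fresh_d i i_range); rewrite -agree.
Qed.

Theorem mainTheorem3 :
  (exists f, is_f f) /\ (exists g, is_g g) /\
  (forall f g : nat -> nat, is_f f -> is_g g -> forall n, 1 <= n -> g n = f n).
Proof.
split; first by exists h; exact: h_is_f.
split; first by exists h; exact: h_is_g.
move=> f g sf sg n n_gt0.
rewrite (greedy_unique g_no_smaller sg h_is_g n_gt0).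
exact: (greedy_unique f_no_smaller h_is_f sf).
Qed.
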